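(* Let $H$ be the real vector space of Hermitian matrices on a finite-dimensional system with inner product $\langle A,B\rangle=\mathrm{Tr}(AB)$. Let $\mathcal{K}\subset H$ be a proper convex cone (closed, convex, pointed, with nonempty interior) and $\mathcal{F}\subset H$ a compact set such that $\{\lambda Z:0\le\lambda\le1,\ Z\in\mathcal{F}\}$ is convex and $\mathcal{F}\cap\mathrm{int}(\mathcal{K})\neq\emptyset$. Define $R^{\mathcal{F}}_{\mathcal{K}}(\mathcal{E}):=\inf\{\lambda\in\mathbb{R}_+:\ (\mathcal{E}+\lambda\mathcal{E}')/(1+\lambda)\in\mathcal{F},\ \mathcal{E}'\in\mathcal{K}\}$ for $\mathcal{E}\in H$, and $\mathcal{N}:=\{\mathcal{E}\in H:\ \delta Z-\mathcal{E}\notin\mathcal{K}\ \ \forall\delta<1,\ Z\in\mathcal{F}\}$. If $\mathcal{E}\in\mathcal{N}$, then $$1+R^{\mathcal{F}}_{\mathcal{K}}(\mathcal{E})=\max\{\langle\varphi,\mathcal{E}\rangle:\ \varphi\in\mathcal{K}^*,\ \langle\varphi,Z\rangle\le1\ \ \forall Z\in\mathcal{F}\}.$$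
   Context: $\mathcal{K}^*:=\{\varphi\in H:\langle\varphi,x\rangle\ge0\ \forall x\in\mathcal{K}\}$ is the dual cone; $\mathrm{int}$ denotes interior; $\mathbb{R}_+$ the nonnegative reals. *)

From HB Require Import structures.
From mathcomp Require Import all_boot all_order all_algebra.
From mathcomp Require Import complex.
From mathcomp Require Import boolp classical_sets reals constructive_ereal ereal.
Set Implicit Arguments. Unset Strict Implicit. Unset Printing Implicit Defensive.
Import Order.TTheory GRing.Theory Num.Theory.
Local Open Scope ring_scope.
Local Open Scope classical_set_scope.

Section Herm.
Variables (R : realType) (n : nat).
Local Notation C := (R[i]).
Local Notation M := ('M[C]_n).

Definition herm (A : M) : Prop := map_mx (@Num.conj C) A^T = A.

Definition Hset : set M := [set A | herm A].

(* inner product <A,B> = Tr(AB) (real for Hermitian A,B; we take its real part) *)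
Definition ip (A B : M) : R := complex.Re (\tr (A *m B)).

Definition rscale (t : R) (A : M) : M := (t%:C)%C *: A.

Definition dist (A B : M) : R := Num.sqrt (ip (A - B) (A - B)).

Definition closedH (S : set M) : Prop :=
  forall A, herm A ->
    (forall e : R, 0 < e -> exists2 B, S B & dist A B < e) -> S A.

Definition interiorH (S : set M) : set M :=
  [set A | herm A /\ exists2 e : R, 0 < e &
     forall B, herm B -> dist A B < e -> S B].

Definition cvgH (u : nat -> M) (L : M) : Prop :=
  forall e : R, 0 < e -> exists N, forall k, (N <= k)%N -> dist (u k) L < e.

Definition compactH (S : set M) : Prop :=
  S `<=` Hset /\
  forall u : nat -> M, (forall k, S (u k)) ->
    exists phi : nat -> nat, (forall k, (phi k < phi k.+1)%N) /\
      exists2 L, S L & cvgH (u \o phi) L.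

Definition convexH (S : set M) : Prop :=
  forall A B t, S A -> S B -> 0 <= t -> t <= 1 ->
    S (rscale t A + rscale (1 - t) B).

Definition coneH (S : set M) : Prop :=
  forall A t, S A -> 0 <= t -> S (rscale t A).

Definition pointedH (S : set M) : Prop :=
  forall A, S A -> S (- A) -> A = 0.

Definition proper_cone (K : set M) : Prop :=
  [/\ K `<=` Hset, coneH K, closedH K, convexH K
    & pointedH K /\ exists A, interiorH K A].

Definition dual_cone (K : set M) : set M :=
  [set phi | herm phi /\ forall x, K x -> 0 <= ip phi x].

Definition downscale (F : set M) : set M :=
  [set A | exists l Z, (0 <= l) /\ (l <= 1) /\ F Z /\ A = rscale l Z].

Definition robustness (K F : set M) (E : M) : \bar R :=
  ereal_inf [set (l%:E)%E | l in
    [set l : R | 0 <= l /\ exists2 E', K E' &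
        F (rscale (1 + l)^-1 (E + rscale l E'))]].

Definition Nset (K F : set M) : set M :=
  [set E | herm E /\ forall (d : R) Z, d < 1 -> F Z -> ~ K (rscale d Z - E)].

End Herm.

From HB Require Import structures.
From mathcomp Require Import all_boot all_order all_algebra.
From mathcomp Require Import complex.
From mathcomp Require Import boolp classical_sets reals constructive_ereal ereal.
From mathcomp Require Import ring lra.
Import Order.TTheory GRing.Theory Num.Theory.
Set Implicit Arguments. Unset Strict Implicit. Unset Printing Implicit Defensive.
Local Open Scope ring_scope.
Local Open Scope classical_set_scope.

(* Let D := {λZ : 0 <= λ <= 1, Z ∈ F} and let p be the gauge of D - K,
   p(X) := inf {t > 0 | t W - X ∈ K for some W ∈ D}.  Since F meets the interior
   of K, p is finite and sublinear on H; it vanishes on -K and is at most 1 on F.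
   Every feasible ψ of the maximisation satisfies <ψ, X> <= p(X), and a
   Hahn–Banach extension of t E |-> t p(E) dominated by p (built one basis vector
   at a time) is <φ, .> for a feasible φ, so the maximum is p(E).  Finally
   p(E) = 1 + R(E): a feasible λ for R(E) makes 1 + λ admissible for p(E);
   conversely an admissible t for p(E) can be traded, at cost ε, for one realised
   by a point of F itself, and E ∈ N forces it to exceed 1. *)

Section HahnBanach.
Variables (R : realType) (V : lmodType R) (S : set V) (p : V -> R).
Hypothesis SD : forall x y, S x -> S y -> S (x + y).
Hypothesis SZ : forall t x, S x -> S (t *: x).
Hypothesis pD : forall x y, S x -> S y -> p (x + y) <= p x + p y.
Hypothesis pZ : forall t x, 0 <= t -> S x -> p (t *: x) = t * p x.

Lemma sublinear_neg_le x : S x -> - p x <= p (- x).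
Proof.
move=> Sx; have p0 : p 0 = 0 by rewrite -(scale0r x) pZ ?mul0r.
by have := pD Sx (SZ (-1) Sx); rewrite scaleN1r addrN p0; lra.
Qed.

Section OneStep.
Variable P : R -> V -> Prop.
Hypothesis P00 : P 0 0.
Hypothesis PD : forall g v g' v', P g v -> P g' v' -> P (g + g') (v + v').
Hypothesis PZ : forall r g v, 0 < r -> P g v -> P (r * g) (r *: v).
Hypothesis PS : forall g v, P g v -> S v.
Hypothesis Pp : forall g v, P g v -> g <= p v.

Lemma dominated_cone_extend_unit y : S y ->
  exists c, forall g v, P g v -> g + c <= p (v + y) /\ g - c <= p (v - y).
Proof.
move=> Sy.
(* [c := sup (g - p (v - y))], which sublinearity keeps below every [p (v' + y) - g']. *)
have sep g v g' v' : P g v -> P g' v' -> g - p (v - y) <= p (v' + y) - g'.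
  move=> Pgv Pgv'; have := Pp (PD Pgv Pgv').
  have Sv := PS Pgv; have Sv' := PS Pgv'.
  have := pD (SD Sv (SZ (-1) Sy)) (SD Sv' Sy).
  rewrite scaleN1r addrACA addNr addr0; lra.
pose A := [set x | exists g v, P g v /\ x = g - p (v - y)].
have A0 : A !=set0 by exists (0 - p (0 - y)); exists 0, 0.
have Aub : ubound A (p (0 + y) - 0) by move=> _ [g [v [Pgv ->]]]; apply: sep.
exists (sup A) => g v Pgv; split.
  suff : sup A <= p (v + y) - g by lra.
  by apply: ge_sup => // _ [g' [v' [Pgv' ->]]]; apply: sep.
suff : g - p (v - y) <= sup A by lra.
by apply: sup_upper_bound; [split => //; exists (p (0 + y) - 0) | exists g, v].
Qed.

Lemma dominated_cone_extend y : S y ->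
  exists c, forall g v t, P g v -> g + t * c <= p (v + t *: y).
Proof.
move=> Sy; have [c Hc] := dominated_cone_extend_unit Sy.
exists c => g v t Pgv; have Sv := PS Pgv.
have [t0|t0|->] := ltrgt0P t; last by rewrite mul0r scale0r !addr0; apply: Pp.
- have ti : 0 < t^-1 by rewrite invr_gt0.
  have [+ _] := Hc _ _ (PZ ti Pgv).
  rewrite -[y in _ *: v + y](scalerK (lt0r_neq0 t0)) -scalerDr.
  rewrite pZ ?invr_ge0 ?(ltW t0) //; last by apply: SD => //; apply: SZ.
  move=> h; have := ler_wpM2l (ltW t0) h.
  by rewrite mulrDr !mulrA divff ?lt0r_neq0 // !mul1r; lra.
- have nt0 : 0 < - t by rewrite oppr_gt0.
  have nti : 0 < (- t)^-1 by rewrite invr_gt0.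
  have [_ +] := Hc _ _ (PZ nti Pgv).
  rewrite -[y in _ *: v - y](scalerK (lt0r_neq0 nt0)) -scalerBr scaleNr opprK.
  rewrite pZ ?invr_ge0 ?(ltW nt0) //; last by apply: SD => //; apply: SZ.
  move=> h; have := ler_wpM2l (ltW nt0) h.
  by rewrite mulrBr !mulrA divff ?lt0r_neq0 // !mul1r; lra.
Qed.

End OneStep.

Section Combinations.
Variables (I : eqType) (x0 : V) (e : I -> V) (s : seq I) (c : I -> R).

Definition combination_graph (g : R) (v : V) := exists a (b : I -> R),
  g = a * p x0 + \sum_(j <- s) b j * c j /\ v = a *: x0 + \sum_(j <- s) b j *: e j.

Lemma combination_graph_in g v : S x0 -> (forall j, S (e j)) ->
  combination_graph g v -> S v.
Proof.
move=> Sx0 Se [a [b [_ ->]]]; apply: SD; first exact: SZ.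
by apply: big_ind => [|x y|j _]; [rewrite -(scale0r x0); apply: SZ|apply: SD|apply: SZ].
Qed.

Lemma combination_graph0 : combination_graph 0 0.
Proof.
exists 0, (fun=> 0); rewrite mul0r scale0r !add0r.
by split; rewrite big1 // => j _; rewrite (mul0r, scale0r).
Qed.

Lemma combination_graphD g v g' v' : combination_graph g v ->
  combination_graph g' v' -> combination_graph (g + g') (v + v').
Proof.
move=> [a [b [-> ->]]] [a' [b' [-> ->]]]; exists (a + a'), (b \+ b'); split.
  by under [X in _ = _ + X]eq_bigr do rewrite mulrDl; rewrite big_split /=; ring.
under [X in _ = _ + X]eq_bigr do rewrite scalerDl.
by rewrite big_split scalerDl addrACA.
Qed.

Lemma combination_graphZ r g v : combination_graph g v ->
  combination_graph (r * g) (r *: v).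
Proof.
move=> [a [b [-> ->]]]; exists (r * a), (fun j => r * b j); split.
  by rewrite mulrDr mulr_sumr mulrA; under eq_bigr do rewrite mulrA.
by rewrite scalerDr scaler_sumr scalerA; under eq_bigr do rewrite scalerA.
Qed.

End Combinations.

Lemma sublinear_dominated_coefficients (I : eqType) (x0 : V) (e : I -> V) (s : seq I) :
  S x0 -> (forall j, S (e j)) -> uniq s ->
  exists c : I -> R, forall a (b : I -> R),
    a * p x0 + \sum_(j <- s) b j * c j <= p (a *: x0 + \sum_(j <- s) b j *: e j).
Proof.
move=> Sx0 Se; elim: s => [_|i s IH /= /andP[i_s us]].
  exists (fun=> 0) => a b; rewrite !big_nil !addr0.
  have [a0|a0] := lerP 0 a; first by rewrite pZ.
  have := sublinear_neg_le (SZ (- a) Sx0).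
  by rewrite -scaleNr opprK pZ ?oppr_ge0 ?(ltW a0) //; lra.
have [c Hc] := IH us.
have dom g v : combination_graph x0 e s c g v -> g <= p v.
  by move=> [a' [b' [-> ->]]]; apply: Hc.
have [ci Hci] := dominated_cone_extend (combination_graph0 x0 e s c)
  (@combination_graphD _ x0 e s c) (fun r g v _ => @combination_graphZ _ x0 e s c r g v)
  (fun g v => combination_graph_in Sx0 Se) dom (Se i).
exists (fun j => if j == i then ci else c j) => a b.
rewrite !big_cons eqxx.
have -> : \sum_(j <- s) b j * (if j == i then ci else c j) = \sum_(j <- s) b j * c j.
  by apply: eq_big_seq => j js; case: eqP => // ji; move: i_s; rewrite -ji js.
rewrite [b i * ci + _]addrC [b i *: e i + _]addrC !addrA.
exact: Hci _ _ (b i) (ex_intro _ a (ex_intro _ b (conj erefl erefl))).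
Qed.

End HahnBanach.

Section Gauge.
Variables (R : realType) (V : lmodType R).

Definition star_hull (F : set V) : set V :=
  [set A | exists l Z, (0 <= l) /\ (l <= 1) /\ F Z /\ A = l *: Z].

Definition core_point (S K : set V) (z : V) :=
  forall y, S y -> exists2 r, 0 < r & K (z - r *: y).

Lemma convex_cone_add (K : set V) x y :
  (forall A t, K A -> 0 <= t -> K (t *: A)) ->
  (forall A B t, K A -> K B -> 0 <= t -> t <= 1 -> K (t *: A + (1 - t) *: B)) ->
  K x -> K y -> K (x + y).
Proof.
move=> Kcone Kconv Kx Ky.
have -> : x + y = 2 *: (2^-1 *: x + (1 - 2^-1) *: y).
  rewrite scalerDr !scalerA (_ : 2 * 2^-1 = 1 :> R); last by field.
  by rewrite (_ : 2 * (1 - 2^-1) = 1 :> R) ?scale1r //; field.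
by apply: Kcone (ler0n _ 2); apply: Kconv => //; lra.
Qed.

Variables (S K F : set V) (Z0 : V).
Hypothesis SZ : forall t x, S x -> S (t *: x).
Hypothesis KS : K `<=` S.
Hypothesis FS : F `<=` S.
Hypothesis Kcone : forall x t, K x -> 0 <= t -> K (t *: x).
Hypothesis KD : forall x y, K x -> K y -> K (x + y).
Hypothesis Dconv : forall A B t, star_hull F A -> star_hull F B -> 0 <= t -> t <= 1 ->
  star_hull F (t *: A + (1 - t) *: B).
Hypothesis FZ0 : F Z0.
Hypothesis Z0_core : core_point S K Z0.

Local Notation D := (star_hull F).

Lemma core_point_mem : K Z0.
Proof.
have [r _] := Z0_core (SZ 0 (FS FZ0)).
by rewrite scale0r scaler0 subr0.
Qed.

Lemma cone0 : K 0.
Proof. by rewrite -(scale0r Z0); apply: Kcone core_point_mem _. Qed.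

Lemma star_hullW Z : F Z -> D Z.
Proof. by move=> FZ; exists 1, Z; rewrite scale1r; do !split => //; lra. Qed.

Lemma star_hull0 : D 0.
Proof. by exists 0, Z0; rewrite scale0r; do !split => //; lra. Qed.

Lemma star_hull_conic t u W1 W2 : 0 < t -> 0 < u -> D W1 -> D W2 ->
  exists2 W, D W & (t + u) *: W = t *: W1 + u *: W2.
Proof.
move=> t0 u0 DW1 DW2; have tu0 : 0 < t + u by rewrite addr_gt0.
have tu : t / (t + u) <= 1 by rewrite ler_pdivrMr // mul1r lerDl ltW.
exists (t / (t + u) *: W1 + (1 - t / (t + u)) *: W2).
  by apply: Dconv => //; rewrite divr_ge0 // ltW.
rewrite scalerDr !scalerA mulrBr mulr1 mulrCA divff ?lt0r_neq0 // mulr1.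
by congr (_ + _ *: _); ring.
Qed.

Definition gauge_set (X : V) := [set t : R | 0 < t /\ exists2 W, D W & K (t *: W - X)].
Definition gauge (X : V) := inf (gauge_set X).

Lemma gauge_set_neq0 X : S X -> gauge_set X !=set0.
Proof.
move=> SX; have [r r0 Kr] := Z0_core SX.
exists r^-1; split; first by rewrite invr_gt0.
exists Z0; first exact: star_hullW.
have ri : 0 <= r^-1 by rewrite invr_ge0 ltW.
by have := Kcone Kr ri; rewrite scalerBr scalerK ?lt0r_neq0.
Qed.

Lemma gauge_set_lbound X : has_lbound (gauge_set X).
Proof. by exists 0 => t [/ltW]. Qed.

Lemma gauge_le X t : gauge_set X t -> gauge X <= t.
Proof. exact/ge_inf/gauge_set_lbound. Qed.

Lemma gauge_ge X t : S X -> (forall s, gauge_set X s -> t <= s) -> t <= gauge X.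
Proof. by move=> SX; apply: lb_le_inf; exact: gauge_set_neq0. Qed.

Lemma gauge_eq0 X : (forall t, 0 < t -> gauge_set X t) -> gauge X = 0.
Proof.
move=> GX; apply/eqP; rewrite eq_le; apply/andP; split.
  by apply/ler_addgt0Pr => t t0; rewrite add0r; apply/gauge_le/GX.
by apply: lb_le_inf => [|t [/ltW]//]; exists 1; apply: GX.
Qed.

Lemma gauge0 : gauge 0 = 0.
Proof.
apply: gauge_eq0 => t t0; split => //; exists 0; first exact: star_hull0.
by rewrite scaler0 subr0; exact: cone0.
Qed.

Lemma gaugeN_cone x : K x -> gauge (- x) = 0.
Proof.
move=> Kx; apply: gauge_eq0 => t t0; split => //; exists 0; first exact: star_hull0.
by rewrite scaler0 sub0r opprK.
Qed.

Lemma gauge_le1 Z : F Z -> gauge Z <= 1.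
Proof.
move=> FZ; apply: gauge_le; split => //; exists Z; first exact: star_hullW.
by rewrite scale1r subrr; exact: cone0.
Qed.

Lemma gauge_setD X Y t u :
  gauge_set X t -> gauge_set Y u -> gauge_set (X + Y) (t + u).
Proof.
move=> [t0 [W1 DW1 K1]] [u0 [W2 DW2 K2]]; split; first exact: addr_gt0.
have [W DW eW] := star_hull_conic t0 u0 DW1 DW2; exists W => //.
by rewrite eW opprD addrACA; apply: KD.
Qed.

Lemma gaugeD X Y : S X -> S Y -> gauge (X + Y) <= gauge X + gauge Y.
Proof.
move=> SX SY; apply/ler_addgt0Pr => e e0.
have e2 : 0 < e / 2 by rewrite divr_gt0.
have [t Xt ht] := inf_adherent e2 (conj (gauge_set_neq0 SX) (gauge_set_lbound X)).
have [u Yu hu] := inf_adherent e2 (conj (gauge_set_neq0 SY) (gauge_set_lbound Y)).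
by have := gauge_le (gauge_setD Xt Yu); rewrite /gauge; lra.
Qed.

Lemma gauge_setZ r X t : 0 < r -> gauge_set X t -> gauge_set (r *: X) (r * t).
Proof.
move=> r0 [t0 [W DW KW]]; split; first exact: mulr_gt0.
by exists W => //; have := Kcone KW (ltW r0); rewrite scalerBr scalerA.
Qed.

Lemma gaugeZ_le r X : 0 < r -> S X -> gauge (r *: X) <= r * gauge X.
Proof.
move=> r0 SX; rewrite -ler_pdivrMl //; apply: gauge_ge => // t Xt.
by rewrite ler_pdivrMl //; apply/gauge_le/gauge_setZ.
Qed.

Lemma gaugeZ r X : 0 <= r -> S X -> gauge (r *: X) = r * gauge X.
Proof.
move=> + SX; rewrite le0r => /predU1P[->|r0]; first by rewrite scale0r gauge0 mul0r.
apply/eqP; rewrite eq_le gaugeZ_le //=.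
have ri : 0 < r^-1 by rewrite invr_gt0.
have := gaugeZ_le ri (SZ r SX).
by rewrite scalerK ?lt0r_neq0 // -ler_pdivrMl ?invr_gt0 // invrK.
Qed.

Lemma gauge_ge_linear (f : V -> R) X :
  zmod_morphism f -> scalable_for *%R f ->
  (forall x, K x -> 0 <= f x) -> (forall Z, F Z -> f Z <= 1) ->
  S X -> f X <= gauge X.
Proof.
move=> fB fZ fK fF SX; apply: gauge_ge => // t [t0 [_ [l [Z [l0 [l1 [FZ ->]]]]] KW]].
have := fK _ KW; rewrite fB !fZ => fW.
have lZ : l * f Z <= 1 by have := fF _ FZ; nra.
nra.
Qed.

Lemma gauge_dominated_cone (f : V -> R) x : zmod_morphism f ->
  (forall X, S X -> f X <= gauge X) -> K x -> 0 <= f x.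
Proof.
move=> fB fdom Kx; have f0 : f 0 = 0 by have := fB 0 0; rewrite subr0 subrr.
have := fdom _ (SZ (-1) (KS Kx)).
by rewrite scaleN1r gaugeN_cone // -sub0r fB f0 sub0r oppr_le0.
Qed.


Definition robustness_set (E : V) := [set l : R | 0 <= l /\ exists2 E', K E' &
  F ((1 + l)^-1 *: (E + l *: E'))].

Lemma robustness_set_lbound E : has_lbound (robustness_set E).
Proof. by exists 0 => l []. Qed.

Lemma gauge_set_robustness E l : robustness_set E l -> gauge_set E (1 + l).
Proof.
move=> [l0 [E' KE' FZ]]; have l1 : 0 < 1 + l by lra.
split => //; exists ((1 + l)^-1 *: (E + l *: E')); first exact: star_hullW.
by rewrite scalerKV ?lt0r_neq0 // addrAC subrr add0r; apply: Kcone.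
Qed.

Section Robustness.
Variable E : V.
Hypothesis NE : forall d Z, d < 1 -> F Z -> ~ K (d *: Z - E).

Lemma gauge_set_perturb t eps : gauge_set E t -> 0 < eps ->
  exists u Z, [/\ F Z, u <= t + eps & K (u *: Z - (E + eps *: Z0))].
Proof.
move=> [t0 [W DW KW]] e0.
have [_ [s [Z [s0 [s1 [FZ ->]]]]] eW] := star_hull_conic t0 e0 DW (star_hullW FZ0).
exists ((t + eps) * s), Z; split => //.
  by rewrite ler_piMr // ltW // addr_gt0.
by rewrite -scalerA eW opprD addrACA subrr addr0.
Qed.

Lemma robustness_gt1 u Z eps : F Z -> 0 < eps ->
  K (u *: Z - (E + eps *: Z0)) -> 1 < u.
Proof.
move=> FZ e0 KuZ; rewrite ltNge; apply/negP => u1.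
have [r r0 Kr] := Z0_core (FS FZ).
apply: (NE (d := u - eps * r)) FZ _; first by have := mulr_gt0 e0 r0; lra.
have -> : (u - eps * r) *: Z - E = u *: Z - (E + eps *: Z0) + eps *: (Z0 - r *: Z).
  by rewrite scalerBr scalerA scalerBl opprD !addrA subrK addrAC.
exact: KD KuZ (Kcone Kr (ltW e0)).
Qed.

Lemma robustness_set_gt1 u Z : F Z -> 1 < u -> K (u *: Z - E) ->
  robustness_set E (u - 1).
Proof.
move=> FZ u1 KuZ; have l0 : 0 < u - 1 by lra.
split; first exact: ltW.
exists ((u - 1)^-1 *: (u *: Z - E)); first by apply: Kcone; rewrite // invr_ge0 ltW.
rewrite scalerKV ?lt0r_neq0 // [1 + _]addrC subrK addrC subrK.
by rewrite scalerK // lt0r_neq0 // (lt_trans ltr01).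
Qed.

Lemma robustness_set_approx t eps : gauge_set E t -> 0 < eps ->
  exists2 l, robustness_set E l & 1 + l <= t + eps.
Proof.
move=> Et e0; have [u [Z [FZ ut KuZ]]] := gauge_set_perturb Et e0.
exists (u - 1); last lra.
apply: robustness_set_gt1 FZ (robustness_gt1 FZ e0 KuZ) _.
by have := KD KuZ (Kcone core_point_mem (ltW e0)); rewrite opprD addrA subrK.
Qed.

Hypothesis SE : S E.

Lemma robustness_set_neq0 : robustness_set E !=set0.
Proof.
have [t Et] := gauge_set_neq0 SE.
by have [l El _] := robustness_set_approx Et ltr01; exists l.
Qed.

Lemma gauge_robustness : gauge E = 1 + inf (robustness_set E).
Proof.
apply/eqP; rewrite eq_le; apply/andP; split.
  rewrite -lerBlDl; apply: lb_le_inf robustness_set_neq0 _ => l.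
  by move=> /gauge_set_robustness/gauge_le; lra.
apply/ler_addgt0Pr => e e0; have e2 : 0 < e / 2 by rewrite divr_gt0.
have [t Et ht] := inf_adherent e2 (conj (gauge_set_neq0 SE) (gauge_set_lbound E)).
have [l El hl] := robustness_set_approx Et e2.
by have := ge_inf (robustness_set_lbound E) El; rewrite /gauge in ht *; lra.
Qed.

Theorem gauge_dual (f : V -> R) : zmod_morphism f -> scalable_for *%R f ->
  (forall X, S X -> f X <= gauge X) -> f E = gauge E ->
  [/\ forall x, K x -> 0 <= f x,
      forall Z, F Z -> f Z <= 1,
      forall g : V -> R, zmod_morphism g -> scalable_for *%R g ->
        (forall x, K x -> 0 <= g x) -> (forall Z, F Z -> g Z <= 1) -> g E <= f E
    & (1%:E + ereal_inf [set l%:E | l in robustness_set E] = (f E)%:E)%E].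
Proof.
move=> fB fZ fdom fE; split.
- by move=> x; apply: gauge_dominated_cone.
- by move=> Z FZ; apply: le_trans (fdom _ (FS FZ)) (gauge_le1 FZ).
- by move=> g gB gZ gK gF; rewrite fE; apply: gauge_ge_linear.
rewrite fE gauge_robustness EFinD -ereal_inf_EFin //.
  exact: robustness_set_lbound.
exact: robustness_set_neq0.
Qed.

End Robustness.

End Gauge.

(* Hermitian matrices only form a real vector space: [hmx R n] is 'M[R[i]]_n
   viewed as an [R]-module through [rscale]. *)
Definition hmx (R : realType) n := 'M[R[i]]_n.
HB.instance Definition _ (R : realType) n := GRing.Zmodule.on (hmx R n).

Section RealScaling.
Variables (R : realType) (n : nat).

Lemma rscaleA s t (A : hmx R n) : rscale s (rscale t A) = rscale (s * t) A.
Proof. by rewrite /rscale scalerA rmorphM. Qed.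

Lemma rscale1 (A : hmx R n) : rscale 1 A = A.
Proof. exact: scale1r. Qed.

Lemma rscaleDr t (A B : hmx R n) : rscale t (A + B) = rscale t A + rscale t B.
Proof. exact: scalerDr. Qed.

Lemma rscaleDl (A : hmx R n) s t : rscale (s + t) A = rscale s A + rscale t A.
Proof. by rewrite /rscale rmorphD scalerDl. Qed.

End RealScaling.

HB.instance Definition _ (R : realType) n := GRing.Zmodule_isLmodule.Build R (hmx R n)
  (@rscaleA R n) (@rscale1 R n) (@rscaleDr R n) (@rscaleDl R n).

Section HermitianMatrices.
Variables (R : realType) (n : nat).
Local Notation C := R[i].
Local Notation M := (hmx R n).

Lemma hmx_scaleE t (A : M) : t *: A = (t%:C)%C *: (A : 'M[C]_n).
Proof. by []. Qed.

Definition adjmx (A : M) : M := map_mx (@Num.conj C) A^T.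

Lemma adjmxD (A B : M) : adjmx (A + B) = adjmx A + adjmx B.
Proof. by rewrite /adjmx linearD map_mxD. Qed.

Lemma adjmxZ t (A : M) : adjmx (t *: A) = t *: adjmx A.
Proof.
apply/matrixP => i j; rewrite !hmx_scaleE !mxE rmorphM.
by congr (_ * _); exact: conjc_real.
Qed.

Lemma adjmxK (A : M) : adjmx (adjmx A) = A.
Proof. by apply/matrixP => i j; rewrite !mxE conjCK. Qed.

Lemma herm0 : herm (0 : M).
Proof. by rewrite /herm linear0 map_mx0. Qed.

Lemma hermD (A B : M) : herm A -> herm B -> herm (A + B).
Proof. by rewrite /herm -!/(adjmx _) adjmxD => -> ->. Qed.

Lemma hermZ t (A : M) : herm A -> herm (t *: A).
Proof. by rewrite /herm -!/(adjmx _) adjmxZ => ->. Qed.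

Lemma ReZ t (x : C) : complex.Re ((t%:C)%C * x) = t * complex.Re x.
Proof. by case: x => a b /=; rewrite mul0r subr0. Qed.

Lemma ip0l (X : M) : ip 0 X = 0.
Proof. by rewrite /ip mul0mx mxtrace0. Qed.

Lemma ipDl (A B X : M) : ip (A + B) X = ip A X + ip B X.
Proof. by rewrite /ip mulmxDl mxtraceD raddfD. Qed.

Lemma ipZl t (A X : M) : ip (t *: A) X = t * ip A X.
Proof. by rewrite /ip hmx_scaleE -scalemxAl mxtraceZ ReZ. Qed.

Lemma ipBr (A X Y : M) : ip A (X - Y) = ip A X - ip A Y.
Proof. by rewrite /ip mulmxBr !raddfB. Qed.

Lemma ipZr t (A X : M) : ip A (t *: X) = t * ip A X.
Proof. by rewrite /ip hmx_scaleE -scalemxAr mxtraceZ ReZ. Qed.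

Lemma ip_zmod_morphism (A : M) : zmod_morphism (ip A : M -> R).
Proof. exact: ipBr. Qed.

Lemma ip_scalable (A : M) : scalable_for *%R (ip A : M -> R).
Proof. by move=> t X; rewrite ipZr. Qed.

Lemma ip_adjmxl (A X : M) : ip (adjmx A) X = ip A (adjmx X).
Proof.
have ReJ (z : C) : complex.Re (Num.conj z) = complex.Re z by case: z.
rewrite /ip -[RHS]ReJ -trace_map_mx map_mxM map_mxCK /adjmx.
by rewrite -mxtrace_tr trmx_mul map_trmx trmxK mxtrace_mulC.
Qed.

Definition hpart (Y : M) : M := 2^-1 *: (Y + adjmx Y).

Lemma herm_hpart Y : herm (hpart Y).
Proof. by rewrite /herm -/(adjmx _) adjmxZ adjmxD adjmxK addrC. Qed.

Lemma hpart_herm X : herm X -> hpart X = X.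
Proof.
move=> hX; rewrite /hpart [adjmx X]hX -mulr2n -scaler_nat scalerA.
by rewrite mulVf ?pnatr_eq0 // scale1r.
Qed.

Lemma hpartD A B : hpart (A + B) = hpart A + hpart B.
Proof. by rewrite /hpart adjmxD addrACA scalerDr. Qed.

Lemma hpartZ t A : hpart (t *: A) = t *: hpart A.
Proof. by rewrite /hpart adjmxZ -scalerDr !scalerA mulrC. Qed.

Lemma hpart0 : hpart 0 = 0.
Proof. by rewrite /hpart /adjmx linear0 map_mx0 addr0 scaler0. Qed.

(* [(i, j, false)] and [(i, j, true)] index the real and imaginary parts of entry (i, j). *)
Definition mxindex := ('I_n * 'I_n * bool)%type.

Definition mxunit (k : mxindex) : M :=
  ((if k.2 then 'i%C else 1) *: delta_mx k.1.1 k.1.2 : 'M[C]_n).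

Definition mxcoord (X : M) (k : mxindex) : R :=
  if k.2 then complex.Im (X k.1.1 k.1.2) else complex.Re (X k.1.1 k.1.2).

Definition hbasis k := hpart (mxunit k).

Lemma sum_mxcoord_mxunit X : \sum_k mxcoord X k *: mxunit k = X.
Proof.
rewrite (eq_bigr (fun k => mxcoord X (k.1, k.2) *: mxunit (k.1, k.2))) => [|[]//].
rewrite -(pair_bigA _ (fun ij b => mxcoord X (ij, b) *: mxunit (ij, b))).
rewrite [RHS]matrix_sum_delta [RHS]pair_bigA; apply: eq_bigr => -[i j] _.
rewrite big_bool; apply/matrixP => k l.
rewrite !mxE /mxcoord /= !mulrA -mulrDl; congr (_ * _).
by case: (X i j) => x y; simpc.
Qed.

Lemma sum_mxcoord_hbasis X : herm X -> \sum_k mxcoord X k *: hbasis k = X.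
Proof.
move=> hX; rewrite -[in RHS](hpart_herm hX) -[in RHS](sum_mxcoord_mxunit X).
rewrite (big_morph hpart hpartD hpart0); apply: eq_bigr => k _.
by rewrite hpartZ.
Qed.

Lemma ip_delta (c : C) a b (X : M) :
  ip ((c *: delta_mx a b : 'M[C]_n) : M) X = complex.Re (c * X b a).
Proof.
rewrite /ip -scalemxAl mxtraceZ; congr (complex.Re (_ * _)).
rewrite /mxtrace (bigD1 a) //= big1 => [|i ia].
  rewrite addr0 !mxE (bigD1 b) //= big1 => [|k kb].
    by rewrite mxE !eqxx mul1r addr0.
  by rewrite mxE eqxx (negbTE kb) /= mul0r.
by rewrite !mxE big1 // => k _; rewrite !mxE (negbTE ia) mul0r.
Qed.

Lemma ip_mxunit k X : herm X -> ip (mxunit k) X = mxcoord X k.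
Proof.
move=> hX; rewrite ip_delta /mxcoord.
have -> : X k.1.1 k.1.2 = Num.conj (X k.1.2 k.1.1) by rewrite -{1}hX !mxE.
by case: k => [[a b] []] /=; case: (X b a) => x y; simpc.
Qed.

Lemma ip_hbasis k X : herm X -> ip (hbasis k) X = mxcoord X k.
Proof.
move=> hX; rewrite /hbasis /hpart ipZl ipDl ip_adjmxl [adjmx X]hX ip_mxunit //.
by field.
Qed.

Lemma herm_sublinear_support (p : M -> R) (E : M) :
  (forall X Y : M, herm X -> herm Y -> p (X + Y) <= p X + p Y) ->
  (forall t (X : M), 0 <= t -> herm X -> p (t *: X) = t * p X) ->
  herm E ->
  exists2 phi : M, herm phi & (forall X, herm X -> ip phi X <= p X) /\ ip phi E = p E.
Proof.
move=> pD pZ hE.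
have [c Hc] := sublinear_dominated_coefficients hermD hermZ pD pZ hE
  (fun k => herm_hpart (mxunit k)) (index_enum_uniq mxindex).
pose phi := \sum_k c k *: hbasis k.
have ip_phi (X : M) : herm X -> ip phi X = \sum_k mxcoord X k * c k.
  move=> hX; rewrite (big_morph (fun A => ip A X) (fun A B => ipDl A B X) (ip0l X)).
  by apply: eq_bigr => k _; rewrite ipZl ip_hbasis // mulrC.
have dom (X : M) : herm X -> ip phi X <= p X.
  move=> hX; have := Hc 0 (mxcoord X).
  by rewrite mul0r add0r scale0r add0r sum_mxcoord_hbasis // -ip_phi.
exists phi.
  by apply: big_ind => [|A B|k _]; [exact: herm0|exact: hermD|exact/hermZ/herm_hpart].
split=> //; apply/eqP; rewrite eq_le dom //=.
have p0 : p 0 = 0 by rewrite -(scale0r E) pZ ?mul0r.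
have := Hc 1 (fun k => - mxcoord E k).
under eq_bigr do rewrite mulNr.
under [X in p (_ + X)]eq_bigr do rewrite scaleNr.
by rewrite sumrN -ip_phi // sumrN sum_mxcoord_hbasis // scale1r subrr p0 mul1r subr_le0.
Qed.

Lemma interiorH_core (K : set M) (Z : M) :
  interiorH K Z -> core_point (@herm R n : set M) K Z.
Proof.
move=> [hZ [e e0 He]] Y hY; set q := Num.sqrt (ip Y Y).
have q0 : 0 <= q by exact: sqrtr_ge0.
have q1 : 0 < 1 + q by lra.
have r0 : 0 < e / (1 + q) by rewrite divr_gt0.
exists (e / (1 + q)) => //; apply: He.
  by rewrite -scaleNr; apply: hermD hZ (hermZ _ hY).
rewrite /dist opprB addrC subrK ipZl ipZr mulrA -expr2 sqrtrM ?sqr_ge0 //.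
rewrite sqrtr_sqr ger0_norm ?(ltW r0) // -/q mulrAC ltr_pdivrMr //.
by rewrite ltr_pM2l //; lra.
Qed.

End HermitianMatrices.

Theorem lemma3 (R : realType) (n : nat) (K F : set 'M[R[i]]_n) (E : 'M[R[i]]_n) :
  proper_cone K ->
  compactH F ->
  convexH (downscale F) ->
  (exists Z, F Z /\ interiorH K Z) ->
  Nset K F E ->
  exists2 phi, (dual_cone K phi /\ forall Z, F Z -> ip phi Z <= 1) &
    (forall psi, dual_cone K psi -> (forall Z, F Z -> ip psi Z <= 1) ->
       ip psi E <= ip phi E) /\
    (1%:E + robustness K F E = (ip phi E)%:E)%E.
Proof.
move=> [KH Kcone _ Kconv _] [FH _] Dconv [Z0 [FZ0 /interiorH_core core]] [hE NE].
have KD := convex_cone_add (V := hmx R n) Kcone Kconv.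
have [phi hphi [phi_dom phiE]] := herm_sublinear_support
  (gaugeD (V := hmx R n) Kcone KD Dconv FZ0 core)
  (gaugeZ (V := hmx R n) (@hermZ R n) FH Kcone FZ0 core) hE.
have [phiK phiF phi_max phi_rob] := gauge_dual (V := hmx R n) (@hermZ R n) KH FH
  Kcone KD Dconv FZ0 core NE hE (ip_zmod_morphism phi) (ip_scalable phi) phi_dom phiE.
exists phi; do !split => // psi [_ psiK] psiF.
exact: phi_max (ip_zmod_morphism psi) (ip_scalable psi) psiK psiF.
Qed.
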